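(* Let $G$ be a subcubic planar graph of girth at least $9$ which cannot be decomposed into a linear forest and a matching, chosen with $|V(G)|+|E(G)|$ minimum among all such graphs. Then $G$ contains no two adjacent vertices of degree $2$.
   Context: A graph is subcubic if every vertex has degree at most $3$. The girth is the length of a shortest cycle ($\infty$ if acyclic). A linear forest is a graph each of whose components is a path. A decomposition of $G$ into a linear forest and a matching is a partition of $E(G)$ into the edge set of a linear forest and the edge set of a matching. *)

From Stdlib Require Import Reals.
From mathcomp Require Import all_boot.

Set Implicit Arguments.
Unset Strict Implicit.
Unset Printing Implicit Defensive.

Record sgraph := SGraph {
  vert :> finType;
  adj : rel vert;
  adj_sym : symmetric adj;
  adj_irr : irreflexive adj }.

Section Defs.
Variable G : sgraph.

Definition edges : {set {set G}} :=
  [set [set x; y] | x in G, y in G & adj x y].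

Definition deg (x : G) : nat := #|[set y | adj x y]|.

Definition gsize : nat := #|G| + #|edges|.

Definition subcubic : Prop := forall x : G, deg x <= 3.

Definition girth_ge (k : nat) : Prop :=
  forall s : seq G, uniq s -> 3 <= size s -> cycle (@adj G) s -> k <= size s.

Definition Frel (F : {set {set G}}) : rel G := fun x y => [set x; y] \in F.

Definition seq_edges (s : seq G) : seq {set G} :=
  [seq [set p.1; p.2] | p <- zip s (behead s)].

(* (V(G), F) is a linear forest: every connected component is a path,
   i.e. its vertex set is listed by a duplicate-free sequence s, consecutive
   vertices of s are F-adjacent, and every F-edge inside the component joins
   consecutive vertices of s. *)
Definition linear_forest (F : {set {set G}}) : Prop :=
  forall x : G, exists s : seq G,
    [/\ uniq s, s != [::],
        path (Frel F) (head x s) (behead s),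
        (forall y, connect (Frel F) x y = (y \in s)) &
        (forall y z, y \in s -> Frel F y z -> [set y; z] \in seq_edges s)].

Definition matching (M : {set {set G}}) : Prop :=
  forall f g, f \in M -> g \in M -> f != g -> [disjoint f & g].

Definition decomposable : Prop :=
  exists F M : {set {set G}},
    [/\ F :&: M = set0, F :|: M = edges, linear_forest F & matching M].

Definition planar : Prop :=
  exists (pos : G -> R * R) (c : G -> G -> R -> R * R),
    injective pos /\
    forall x y, adj x y ->
      [/\ c x y R0 = pos x /\ c x y R1 = pos y,
          continuity (fun t => fst (c x y t)) /\
          continuity (fun t => snd (c x y t)),
          (forall t u, (Rle R0 t /\ Rle t R1) -> (Rle R0 u /\ Rle u R1) ->
             c x y t = c x y u -> t = u),
          (forall t z, (Rlt R0 t /\ Rlt t R1) -> c x y t <> pos z) &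
          (forall u v t t', adj u v -> [set x; y] != [set u; v] ->
             (Rlt R0 t /\ Rlt t R1) -> (Rlt R0 t' /\ Rlt t' R1) -> c x y t <> c u v t')].

End Defs.

(* Delete the edge xy.  The graph G - xy is still planar, subcubic
   and of girth >= 9, and it is strictly smaller, so by minimality it has a
   decomposition (F, M).  In G - xy the vertex x has the single neighbour a
   and y the single neighbour b.
   - If xa is in M, then x is isolated in F while y has at most one
     F-neighbour; adding xy to F glues x to the end y of a path, so F + xy is
     still a linear forest.  Symmetrically if yb is in M.
   - Otherwise no edge of M touches x or y, so M + xy is still a matching.
   Either way G is decomposable, a contradiction. *)

From mathcomp Require Import all_boot.

Set Implicit Arguments.
Unset Strict Implicit.
Unset Printing Implicit Defensive.

Section EdgeFacts.
Variable G : sgraph.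

Lemma edgesP (f : {set G}) :
  reflect (exists u v, adj u v /\ f = [set u; v]) (f \in edges G).
Proof.
apply: (iffP imset2P).
  by case=> u v _; rewrite inE => huv ->; exists u, v.
by case=> u [v [huv ->]]; apply: (Imset2spec (x1 := u) (x2 := v)); rewrite ?inE.
Qed.

Lemma edge_ends_neq (p u : G) : [set p; u] \in edges G -> u != p.
Proof.
case/edgesP=> u' [v' [huv he]]; apply/eqP => hu; move: he; rewrite hu setUid.
move=> he; have /set1P hu' : u' \in [set p] by rewrite he !inE eqxx.
have /set1P hv' : v' \in [set p] by rewrite he !inE eqxx orbT.
by move: huv; rewrite hu' hv' adj_irr.
Qed.

Lemma pair_cancel (p u r : G) : [set p; u] = [set p; r] -> u != p -> u = r.
Proof.
move=> h hn; have : u \in [set p; r] by rewrite -h !inE eqxx orbT.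
by case/set2P => // hu; rewrite hu eqxx in hn.
Qed.

Lemma deg2_nbrs (p q : G) :
  deg p = 2 -> adj p q -> exists r, forall v, adj p v -> v = q \/ v = r.
Proof.
rewrite /deg (cardsD1 q) inE => h hq; rewrite hq in h.
have /cards1P [r hr] : #|[set v | adj p v] :\ q| == 1.
  by apply/eqP; apply: (@addnI 1).
exists r => v hv; case: (eqVneq v q) => [->|hvq]; first by left.
by right; apply/set1P; rewrite -hr !inE hvq hv.
Qed.

Lemma edge_at_nbr (p q r : G) (f : {set G}) :
  (forall v, adj p v -> v = q \/ v = r) ->
  f \in edges G -> f != [set p; q] -> p \in f -> f = [set p; r].
Proof.
move=> hn /edgesP [u [v [huv ->]]] hne /set2P [hu|hv].
  subst u; case: (hn _ huv) => hv; subst v => //.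
  by rewrite eqxx in hne.
subst v; rewrite adj_sym in huv; case: (hn _ huv) => hu; subst u.
  by rewrite setUC eqxx in hne.
by rewrite setUC.
Qed.

End EdgeFacts.

Section EdgeDeletion.
Variables (G : sgraph) (x y : G).

Definition del_adj : rel G := fun u v => adj u v && ([set u; v] != [set x; y]).

Lemma del_adj_sym : symmetric del_adj.
Proof. by move=> u v; rewrite /del_adj adj_sym setUC. Qed.

Lemma del_adj_irr : irreflexive del_adj.
Proof. by move=> u; rewrite /del_adj adj_irr. Qed.

Definition del_edge : sgraph := SGraph del_adj_sym del_adj_irr.

Lemma edges_del : edges del_edge = edges G :\ [set x; y].
Proof.
apply/setP => f; apply/idP/idP.
  case/edgesP => u [v [/andP [huv hne] ->]]; apply/setD1P; split => //.
  by apply/(@edgesP G); exists u, v.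
case/setD1P => hne /(@edgesP G) [u [v [huv hf]]]; apply/(@edgesP del_edge).
by exists u, v; rewrite /= /del_adj huv -hf hne.
Qed.

Lemma del_planar : planar G -> planar del_edge.
Proof.
case=> pos [c [ip h]]; exists pos, c; split => // u v /andP [huv _].
have [h1 h2 h3 h4 h5] := h u v huv; split => //.
by move=> u' v' t t' /andP [h' _]; apply: h5.
Qed.

Lemma del_subcubic : subcubic G -> subcubic del_edge.
Proof.
move=> hs u; apply: leq_trans (hs u); apply: subset_leq_card.
by apply/subsetP => v; rewrite !inE => /andP [].
Qed.

Lemma del_girth k : girth_ge G k -> girth_ge del_edge k.
Proof.
move=> hg s us hs hc; apply: hg us hs _; apply: sub_cycle hc.
by move=> u v /andP [].
Qed.

Lemma del_gsize : adj x y -> gsize del_edge < gsize G.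
Proof.
move=> hxy; rewrite /gsize edges_del ltn_add2l; apply: proper_card.
by apply: properD1; apply/(@edgesP G); exists x, y.
Qed.

End EdgeDeletion.

Section ForestExtension.
Variable G : sgraph.
Implicit Types (F : {set {set G}}) (s t : seq G).

Definition path_component F (z : G) s :=
  [/\ uniq s, s != [::], path (Frel F) (head z s) (behead s),
      (forall w, connect (Frel F) z w = (w \in s)) &
      (forall u v, u \in s -> Frel F u v -> [set u; v] \in seq_edges s)].

Lemma Frel_sym F : symmetric (Frel F).
Proof. by move=> u v; rewrite /Frel setUC. Qed.

Lemma Fconnect_sym F : connect_sym (Frel F).
Proof. exact: sym_connect_sym (Frel_sym F). Qed.

Lemma seq_edges_cons2 a b s :
  seq_edges [:: a, b & s] = [set a; b] :: seq_edges (b :: s).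
Proof. by []. Qed.

Lemma seq_edges_rcons a s v :
  seq_edges (rcons (a :: s) v) = rcons (seq_edges (a :: s)) [set last a s; v].
Proof.
elim: s a => [|b s IH] a //=.
by rewrite -/(rcons (b :: s) v) seq_edges_cons2 IH.
Qed.

Variables (F : {set {set G}}) (x y : G).
Hypothesis lfF : linear_forest F.
Hypothesis x_isolated : forall v, ~~ Frel F x v.
Hypothesis y_nbr_uniq : forall u v, Frel F y u -> Frel F y v -> u = v.
Hypothesis xy_neq : x != y.

Let e := [set x; y].
Let F' := e |: F.

Lemma Frel_add u v : Frel F' u v = ([set u; v] == e) || Frel F u v.
Proof. by rewrite /Frel in_setU1. Qed.

Lemma Frel_sub : subrel (Frel F) (Frel F').
Proof. by move=> u v h; rewrite Frel_add h orbT. Qed.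

Lemma isolated_connect w : connect (Frel F) x w -> w = x.
Proof.
case/connectP=> [[|a p]] /=; first by move=> _ ->.
by rewrite (negbTE (x_isolated a)).
Qed.

(* The vertex set of the component of F' containing the new edge. *)
Definition joined u := (u == x) || connect (Frel F) y u.

Lemma joined_x : joined x. Proof. by rewrite /joined eqxx. Qed.
Lemma joined_y : joined y. Proof. by rewrite /joined connect0 orbT. Qed.

Lemma joined_connect_x z : (connect (Frel F) z x || joined z) = joined z.
Proof.
case hz: (connect _ z x) => //=.
by rewrite Fconnect_sym in hz; rewrite (isolated_connect hz) joined_x.
Qed.

Lemma joined_connect_y z : (connect (Frel F) z y || joined z) = joined z.
Proof.
case hz: (connect _ z y) => //=.
by rewrite /joined Fconnect_sym hz orbT.
Qed.

Lemma connect_add z w :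
  connect (Frel F') z w = connect (Frel F) z w || joined z && joined w.
Proof.
apply/idP/idP.
  have cl : closed (Frel F') [pred w | connect (Frel F) z w || joined z && joined w].
    move=> u v; rewrite Frel_add => /orP[/eqP he|hF]; rewrite !inE.
      have /set2P hu : u \in e by rewrite -he !inE eqxx.
      have /set2P hv : v \in e by rewrite -he !inE eqxx orbT.
      by case: hu => ->; case: hv => ->;
        rewrite ?joined_x ?joined_y !andbT ?joined_connect_x ?joined_connect_y.
    have ux : (u == x) = false.
      by apply/negbTE/eqP => hx; move: hF; rewrite hx (negbTE (x_isolated v)).
    have vx : (v == x) = false.
      apply/negbTE/eqP => hx; move: hF.
      by rewrite Frel_sym hx (negbTE (x_isolated u)).
    have := connect_closed (Fconnect_sym F) z hF.
    have := connect_closed (Fconnect_sym F) y hF.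
    by rewrite /joined ux vx /= !inE => -> ->.
  by move=> h; have := closed_connect cl h; rewrite !inE connect0 => <-.
have sub : subrel (connect (Frel F)) (connect (Frel F')).
  by apply: connect_sub => u v h; apply/connect1/Frel_sub.
case/orP=> [|/andP[hz hw]]; first exact: sub.
have to_x u : joined u -> connect (Frel F') u x.
  case/orP=> [/eqP ->|hu]; first exact: connect0.
  apply: (connect_trans (y := y)); first by rewrite Fconnect_sym; exact: sub.
  by apply: connect1; rewrite Frel_add /e setUC eqxx.
by apply: connect_trans (to_x _ hz) _; rewrite Fconnect_sym; exact: to_x.
Qed.

(* Since y has at most one F-neighbour, it is an end of its path. *)
Lemma y_path_end s : path_component F y s ->
  exists a s0, s = a :: s0 /\ (a = y \/ last a s0 = y).
Proof.
case=> us ne pa co _; case: s us ne pa co => [|a s0] // us _ pa co.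
exists a, s0; split => //.
have : y \in a :: s0 by rewrite -co connect0.
rewrite in_cons; case/orP=> [/eqP ->|yin]; first by left.
right; case/splitPr: yin us pa => p1 [|v p2] us pa; first by rewrite last_cat.
exfalso; move: pa; rewrite /= cat_path /= => /and3P[_ h1 /andP[h2 _]].
rewrite Frel_sym in h1; have hv := y_nbr_uniq h1 h2.
move: us; rewrite -cat_cons cat_uniq => /and3P[_ /hasPn hn _].
have := hn v; rewrite [v \in y :: _]in_cons [v \in v :: _]in_cons eqxx orbT.
by move=> /(_ isT); rewrite -hv mem_last.
Qed.

Lemma joined_component z t s : path_component F y s -> joined z ->
  uniq t -> t != [::] -> path (Frel F') (head z t) (behead t) ->
  (forall w, (w \in t) = (w == x) || (w \in s)) ->
  {subset seq_edges s <= seq_edges t} -> e \in seq_edges t ->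
  path_component F' z t.
Proof.
case=> _ _ _ co ed jz ut nt pt mt st et; split => //.
  move=> w; rewrite connect_add jz mt -co /=.
  case hw: (connect _ z w) => //=.
  case/orP: jz => [/eqP hz|hz].
    by move: hw; rewrite hz => /isolated_connect ->; rewrite eqxx.
  by rewrite (connect_trans hz hw) orbT.
move=> u v ut'; rewrite Frel_add => /orP[/eqP ->//|hF].
apply/st/ed => //; move: ut'; rewrite mt => /orP[/eqP hu|//].
by move: hF; rewrite hu (negbTE (x_isolated v)).
Qed.

(* Components of F' containing the new edge: prepend or append x to the
   path of y, according to the end at which y sits. *)
Lemma joined_path z : joined z -> exists t, path_component F' z t.
Proof.
move=> jz; have [s cs] := lfF y.
have [us _ ps co _] := cs.
have xs : x \notin s.
  rewrite -co; apply/negP => h; rewrite Fconnect_sym in h.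
  by move: xy_neq; rewrite (isolated_connect h) eqxx.
have ps' := sub_path Frel_sub ps.
have [a [s0 [hs [hy|hy]]]] := y_path_end cs; subst s.
  exists (x :: a :: s0); apply: (joined_component cs jz).
  - by rewrite cons_uniq xs.
  - by [].
  - by subst a; rewrite /= Frel_add eqxx.
  - by move=> w; rewrite in_cons.
  - by move=> f hf; rewrite seq_edges_cons2 in_cons hf orbT.
  - by rewrite seq_edges_cons2 hy in_cons eqxx.
exists (rcons (a :: s0) x); apply: (joined_component cs jz).
- by rewrite rcons_uniq xs.
- by case: s0 {hy ps ps' us xs cs co}.
- by rewrite rcons_cons /= rcons_path ps' /= Frel_add hy /e setUC eqxx.
- by move=> w; rewrite mem_rcons in_cons.
- by move=> f hf; rewrite seq_edges_rcons mem_rcons in_cons hf orbT.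
- by rewrite seq_edges_rcons hy mem_rcons in_cons /e setUC eqxx.
Qed.

Lemma unjoined_path z : ~~ joined z -> exists t, path_component F' z t.
Proof.
move=> /negbTE jz; have [s [us ns pa co ed]] := lfF z; exists s; split => //.
- exact: sub_path Frel_sub _ _ pa.
- by move=> w; rewrite connect_add jz /= orbF co.
move=> u v ut; rewrite Frel_add => /orP[/eqP he|]; last exact: ed.
have /set2P hu : u \in e by rewrite -he !inE eqxx.
move: ut; rewrite -co; case: hu => -> hc.
  by have := joined_connect_x z; rewrite hc jz.
by have := joined_connect_y z; rewrite hc jz.
Qed.

Lemma linear_forest_add : linear_forest F'.
Proof.
move=> z; case jz: (joined z); first exact: joined_path.
by apply: unjoined_path; rewrite jz.
Qed.

End ForestExtension.

Section DecompositionExtension.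
Variables (G : sgraph) (p q a b : G) (F M : {set {set G}}).
Hypothesis pq : adj p q.
Hypothesis p_nbrs : forall v, adj p v -> v = q \/ v = a.
Hypothesis q_nbrs : forall v, adj q v -> v = p \/ v = b.
Hypotheses (FM0 : F :&: M = set0) (FMU : F :|: M = edges G :\ [set p; q]).
Hypotheses (lfF : linear_forest F) (mM : matching M).

Lemma F_not_M f : f \in F -> f \in M -> False.
Proof.
move=> hF hM; suff : f \in F :&: M by rewrite FM0 inE.
by rewrite inE hF hM.
Qed.

Lemma F_edges f : f \in F -> f \in edges G :\ [set p; q].
Proof. by move=> h; rewrite -FMU inE h. Qed.

Lemma M_edges f : f \in M -> f \in edges G :\ [set p; q].
Proof. by move=> h; rewrite -FMU inE h orbT. Qed.

Lemma pq_edge : [set p; q] \in edges G.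
Proof. by apply/edgesP; exists p, q. Qed.

(* If pa is in M, then p is isolated in F and q has at most the F-neighbour
   b, so pq can be added to the linear forest. *)
Lemma extend_forest : [set p; a] \in M -> decomposable G.
Proof.
move=> hpa; exists ([set p; q] |: F), M; split => //.
- apply/setP => f; rewrite !inE; apply/negP => /andP[/orP[/eqP ->|hF] hM].
    by have := M_edges hM; rewrite !inE eqxx.
  exact: F_not_M hF hM.
- by rewrite -setUA FMU setD1K // pq_edge.
apply: linear_forest_add => //.
- move=> v; apply/negP => hF; have /setD1P [hne he] := F_edges hF.
  have := edge_at_nbr p_nbrs he hne; rewrite !inE eqxx => /(_ isT) hpv.
  by apply: (F_not_M hF); rewrite hpv.
- have q_F_nbr u : Frel F q u -> u = b.
    move=> hF; have /setD1P [hne he] := F_edges hF.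
    have hne' : [set q; u] != [set q; p] by rewrite (setUC [set q] [set p]).
    have := edge_at_nbr q_nbrs he hne'; rewrite !inE eqxx => /(_ isT) hqb.
    exact: pair_cancel hqb (edge_ends_neq he).
  by move=> u v /q_F_nbr -> /q_F_nbr ->.
- by apply/eqP => h; move: pq; rewrite h adj_irr.
Qed.

(* If neither pa nor qb is in M, no edge of M meets pq, so pq can be added
   to the matching. *)
Lemma extend_matching :
  [set p; a] \notin M -> [set q; b] \notin M -> decomposable G.
Proof.
move=> hpa hqb.
have disj g : g \in M -> [disjoint [set p; q] & g].
  move=> hg; have /setD1P [hne he] := M_edges hg.
  have pg : p \notin g.
    by apply: contra hpa => pg; rewrite -(edge_at_nbr p_nbrs he hne pg).
  have qg : q \notin g.
    have hne' : g != [set q; p] by rewrite (setUC [set q]).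
    by apply: contra hqb => qg; rewrite -(edge_at_nbr q_nbrs he hne' qg).
  rewrite -setI_eq0; apply/eqP/setP => w; rewrite !inE.
  by apply/negP => /andP [/orP [] /eqP -> hwg]; [rewrite hwg in pg | rewrite hwg in qg].
exists F, ([set p; q] |: M); split => //.
- apply/setP => f; rewrite !inE; apply/negP => /andP [hF /orP [/eqP hf|hM]].
    by have := F_edges hF; rewrite hf !inE eqxx.
  exact: F_not_M hF hM.
- by rewrite setUCA FMU setD1K // pq_edge.
move=> f g; rewrite !in_setU1 => /orP [/eqP ->|hf] /orP [/eqP ->|hg] hfg.
- by rewrite eqxx in hfg.
- exact: disj.
- by rewrite disjoint_sym; apply: disj.
- exact: mM.
Qed.

End DecompositionExtension.

Lemma decomposable_del_deg2 (G : sgraph) (x y : G) :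
  adj x y -> deg x = 2 -> deg y = 2 ->
  decomposable (del_edge x y) -> decomposable G.
Proof.
move=> hxy dx dy [F [M [FM0 FMU lfF mM]]]; rewrite edges_del in FMU.
have hyx : adj y x by rewrite adj_sym.
have [a na] := deg2_nbrs dx hxy; have [b nb] := deg2_nbrs dy hyx.
have [hxa|hxa] := boolP ([set x; a] \in M).
  exact: (extend_forest hxy na nb FM0 FMU lfF mM hxa).
have [hyb|hyb] := boolP ([set y; b] \in M); last first.
  exact: (extend_matching hxy na nb FM0 FMU lfF mM hxa hyb).
rewrite (setUC [set x]) in FMU; exact: (extend_forest hyx nb na FM0 FMU lfF mM hyb).
Qed.

Theorem lemma19 (G : sgraph) :
  planar G -> subcubic G -> girth_ge G 9 -> ~ decomposable G ->
  (forall H : sgraph, planar H -> subcubic H -> girth_ge H 9 ->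
     ~ decomposable H -> gsize G <= gsize H) ->
  forall x y : G, adj x y -> ~ (deg x = 2 /\ deg y = 2).
Proof.
move=> pl sc gi nd minG x y hxy [dx dy].
have nd_del : ~ decomposable (del_edge x y).
  by move/(decomposable_del_deg2 hxy dx dy).
have := minG _ (@del_planar G x y pl) (@del_subcubic G x y sc)
  (@del_girth G x y 9 gi) nd_del.
by rewrite leqNgt del_gsize.
Qed.
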